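(* Let $n$ be a positive integer and $x\in\Gamma_n$. Then \[ \xi_n\bigl(\sigma_{\mathrm{RF}}(x)\bigr)=n-\tfrac12+\tfrac12\,\#_{\mathrm{dl}}(x)+\tfrac12\,W_{\mathrm{tot}}(G_x). \]
   Context: Let $[n]=\{1,\dots,n\}$. $\Gamma_n$ is the set of words $x=(x_1,\dots,x_{2n})\in[n]^{2n}$ in which every symbol of $[n]$ occurs exactly twice. Colours are formal symbols $r,b$. $[\,\cdot\,]$ is the Iverson bracket. For $f\in\{r,b\}^{2n}$, $\xi_n(f)=\sum_{i=1}^{2n-1}[f_i\neq f_{i+1}]$. The red-first colouring $\sigma_{\mathrm{RF}}(x)$ has $i$-th entry $r$ if $x_i\notin\{x_1,\dots,x_{i-1}\}$ and $b$ otherwise. For $i\in[2n-1]$, $\eta(x,i)=[x_{i+1}\in\{x_1,\dots,x_i\}]\oplus[x_i\in\{x_1,\dots,x_{i-1}\}]$. For $e\subseteq[n]$, $\theta_x(e)=-\sum_{i=1}^{2n-1}(-1)^{\eta(x,i)}\delta_{e,\{x_i,x_{i+1}\}}$. The BPSP graph $G_x=(V_x,E_x,W_x)$ has $V_x=[n]$, $E_x=\{\{x_i,x_{i+1}\}: i\in[2n-1],\ x_i\neq x_{i+1},\ \theta_x(\{x_i,x_{i+1}\})\neq0\}$, $W_x=\theta_x|_{E_x}$; $W_{\mathrm{tot}}(G_x)=\sum_{e\in E_x}W_x(e)$. $\#_{\mathrm{dl}}(x)=|\{i\in[2n-1]:x_i=x_{i+1}\}|$. *)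

From HB Require Import structures.
From mathcomp Require Import all_boot all_order all_algebra.
Set Implicit Arguments. Unset Strict Implicit. Unset Printing Implicit Defensive.
Import Order.TTheory GRing.Theory Num.Theory.

(* Words are sequences of naturals; positions are 0-based in the seq
   (position i of the paper = index i-1), symbols are the naturals 1..n. *)

Definition Gamma (n : nat) (x : seq nat) : bool :=
  [&& size x == 2 * n,
      all (fun v => 0 < v <= n) x &
      all (fun k => count_mem k x == 2) (iota 1 n)].

Inductive colour := r | b.
Definition colour_eqb (c d : colour) : bool :=
  match c, d with r, r | b, b => true | _, _ => false end.
Lemma colour_eqP : Equality.axiom colour_eqb.
Proof. by case; case; constructor. Qed.
HB.instance Definition _ := hasDecEq.Build colour colour_eqP.

Definition xi (n : nat) (f : seq colour) : nat :=
  \sum_(0 <= i < 2 * n - 1) (nth r f i != nth r f i.+1).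

Definition sigma_RF (x : seq nat) : seq colour :=
  [seq (if nth 0 x i \in take i x then b else r) | i <- iota 0 (size x)].

(* eta(x,i) (0-based j = i-1) *)
Definition eta (x : seq nat) (j : nat) : bool :=
  (nth 0 x j.+1 \in take j.+1 x) (+) (nth 0 x j \in take j x).

Definition upair_eq (e f : nat * nat) : bool :=
  ((e.1 == f.1) && (e.2 == f.2)) || ((e.1 == f.2) && (e.2 == f.1)).

Definition theta (n : nat) (x : seq nat) (e : nat * nat) : int :=
  - \sum_(0 <= j < 2 * n - 1)
      ((-1) ^+ eta x j *
       (if upair_eq e (nth 0 x j, nth 0 x j.+1) then 1 else 0)).

Definition norm_pair (a c : nat) : nat * nat := (minn a c, maxn a c).

Definition Ex (n : nat) (x : seq nat) : seq (nat * nat) :=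
  undup [seq norm_pair (nth 0 x j) (nth 0 x j.+1) |
          j <- iota 0 (2 * n - 1) &
          (nth 0 x j != nth 0 x j.+1) &&
          (theta n x (nth 0 x j, nth 0 x j.+1) != 0)].

Definition Wtot (n : nat) (x : seq nat) : int :=
  \sum_(e <- Ex n x) theta n x e.

Definition ndl (n : nat) (x : seq nat) : nat :=
  \sum_(0 <= j < 2 * n - 1) (nth 0 x j == nth 0 x j.+1).

From mathcomp Require Import all_boot all_order all_algebra.
From mathcomp Require Import zify lra.
Import Order.TTheory GRing.Theory Num.Theory.
Set Implicit Arguments. Unset Strict Implicit. Unset Printing Implicit Defensive.

(* In the red-first colouring, positions i and i+1 get different colours
   exactly when eta(x,i) = 1, so xi counts the positions with eta = 1.
   Regrouping the sum of the weights theta by edges, every position i that is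
   not a double letter contributes -(-1)^eta(x,i) to W_tot (edges of weight 0,
   dropped from E_x, contribute nothing anyway), while at a double letter
   eta = 1 because the second copy of the symbol follows its first one.
   Hence 2 eta(x,i) = 1 + [double letter] - [no double letter] (-1)^eta(x,i)
   at each of the 2n-1 positions, and summing gives the formula. *)

Lemma sum_undup_map (T K : eqType) (V : nmodType) (s : seq T) (f : T -> K)
    (F : T -> V) :
  (\sum_(k <- undup (map f s)) \sum_(i <- s | f i == k) F i
   = \sum_(i <- s) F i)%R.
Proof.
under eq_bigr do rewrite big_mkcond.
rewrite exchange_big /=; apply: eq_big_seq => i si.
rewrite -big_mkcond -big_filter.
have -> : [seq k <- undup (map f s) | f i == k] = [:: f i].
  rewrite -(filter_pred1_uniq (undup_uniq (map f s))) ?mem_undup ?map_f //.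
  by apply: eq_filter => k; rewrite /= eq_sym.
by rewrite big_seq1.
Qed.

Lemma upair_eq_norm_pair (a c : nat) q :
  upair_eq (norm_pair a c) q = upair_eq (a, c) q.
Proof.
case: q => q1 q2; rewrite /upair_eq /norm_pair /minn /maxn.
by case: ltnP => _ /=;
  case: (a == q1); case: (a == q2); case: (c == q1); case: (c == q2).
Qed.

Lemma upair_eqE (e q : nat * nat) :
  e.1 < e.2 -> upair_eq e q = (e == norm_pair q.1 q.2).
Proof.
case: e q => e1 e2 [q1 q2] /= lt_e.
rewrite /upair_eq /norm_pair /= xpair_eqE.
apply/idP/idP => [/orP [] /andP [/eqP h1 /eqP h2] | /andP [/eqP h1 /eqP h2]].
- by apply/andP; split; apply/eqP; lia.
- by apply/andP; split; apply/eqP; lia.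
by apply/orP; case: (leqP q1 q2) => ?; [left | right];
  apply/andP; split; apply/eqP; lia.
Qed.

Lemma Wtot_by_positions n x :
  (Wtot n x = - \sum_(0 <= j < 2 * n - 1 | nth 0%N x j != nth 0%N x j.+1)
                   (-1) ^+ eta x j)%R.
Proof.
set I := index_iota 0 (2 * n - 1).
set P := fun j => nth 0 x j != nth 0 x j.+1.
set f := fun j => norm_pair (nth 0 x j) (nth 0 x j.+1).
set U := undup [seq f j | j <- I & P j].
have U_lt e : e \in U -> e.1 < e.2.
  rewrite mem_undup => /mapP [j]; rewrite mem_filter => /andP [/eqP ? _] ->.
  by rewrite /f /norm_pair /=; lia.
have theta_U e : e \in U ->
    (theta n x e
     = - \sum_(j <- [seq j <- I | P j] | f j == e) (-1) ^+ eta x j)%R.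
  move=> /U_lt lt_e; rewrite /theta big_filter_cond; congr (- _)%R.
  rewrite [RHS]big_mkcond; apply: eq_bigr => j _; rewrite upair_eqE // eq_sym.
  case: eqP => [fj_e | _]; rewrite ?mulr1 ?mulr0 ?andbF //.
  suff -> : P j by [].
  move: lt_e; rewrite -fj_e /f /P /norm_pair /=.
  by case: eqP => // ->; rewrite minnn maxnn ltnn.
have Ex_U : Ex n x = [seq e <- U | theta n x e != 0].
  rewrite /Ex /U filter_undup filter_map -filter_predI /I /index_iota subn0.
  congr (undup (map _ _)); apply: eq_filter => j /=; rewrite andbC.
  by rewrite /theta; under [in RHS]eq_bigr do rewrite upair_eq_norm_pair.
rewrite /Wtot Ex_U big_filter big_rmcond => [|e /negPn /eqP //].
by rewrite (eq_big_seq _ theta_U) sumrN sum_undup_map big_filter.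
Qed.

Lemma eta_double_letter x j :
    j.+1 < size x -> count_mem (nth 0 x j) x <= 2 ->
  nth 0 x j = nth 0 x j.+1 -> eta x j.
Proof.
move=> lt_j count_le2 dbl.
rewrite /eta (take_nth 0) 1?ltnW // mem_rcons inE -dbl eqxx /=.
apply/negP; rewrite -has_pred1 has_count => count_before.
have split_x : x = take j x ++ nth 0 x j :: nth 0 x j.+1 :: drop j.+2 x.
  by rewrite -(drop_nth 0) // -(drop_nth 0) 1?ltnW // cat_take_drop.
move: count_le2; rewrite {2}split_x count_cat /= -dbl eqxx /=.
(* [set] identifies two copies of this count that differ only in an implicit
   type argument, which [lia] would otherwise treat as distinct atoms. *)
by move: count_before; set c := count _ (take j x); lia.
Qed.

Lemma xi_sigma_RF n x : 2 * n <= size x ->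
  xi n (sigma_RF x) = \sum_(0 <= j < 2 * n - 1) eta x j.
Proof.
move=> le_size; apply: eq_big_nat => j /andP [_ lt_j].
have [lt_j0 lt_j1] : j < size x /\ j.+1 < size x by lia.
rewrite /sigma_RF !(nth_map 0) ?size_iota // !nth_iota //.
by rewrite /eta; do 2 case: (_ \in _).
Qed.

Lemma Gamma_count_mem n x v : Gamma n x -> v \in x -> count_mem v x = 2.
Proof.
case/and3P=> _ /allP symbols /allP counts vx.
by apply/eqP/counts; rewrite mem_iota; have := symbols v vx; lia.
Qed.

Lemma two_xi_sigma_RF n x : Gamma n x ->
  ((xi n (sigma_RF x))%:Z *+ 2 = (2 * n - 1)%N%:Z + (ndl n x)%:Z + Wtot n x)%R.
Proof.
move=> Gx; have size_x : size x = 2 * n by case/and3P: Gx => /eqP.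
rewrite xi_sigma_RF ?size_x // Wtot_by_positions /ndl.
have -> : ((2 * n - 1)%N%:Z = \sum_(0 <= j < 2 * n - 1) 1)%R.
  by rewrite sumr_const_nat subn0 natz.
rewrite -!natz !natr_sum -sumrMnl (big_mkcond (fun j => _ != _)) -sumrN.
rewrite -!big_split /=.
apply: eq_big_nat => j /andP [_ lt_j].
have lt_j1 : j.+1 < size x by lia.
case: eqP => [dbl | _] /=.
  by rewrite eta_double_letter // (Gamma_count_mem Gx) ?mem_nth // ltnW.
by case: (eta x j).
Qed.

Local Open Scope ring_scope.

Theorem corollary1 (n : nat) (x : seq nat) :
  (0 < n)%N -> Gamma n x ->
  ((xi n (sigma_RF x))%:R : rat)
    = n%:R - 1 / 2 + (ndl n x)%:R / 2 + (Wtot n x)%:~R / 2.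
Proof.
move=> n_gt0 Gx.
have := congr1 (fun z : int => z%:~R : rat) (two_xi_sigma_RF Gx).
rewrite /= !rmorphD /= -!pmulrn natrB ?muln_gt0 // natrM; lra.
Qed.
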